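(* Let $(X,d,\mu)$, $p$, $\underline{Q}_\mu$ be as in the context, let $\theta_2\in(0,\min\{p,\underline{Q}_\mu\})$ and let $S^2\in\mathcal{ADR}_{\theta_2}(X)$ be a closed set. Then for each $c\ge1$ there is a constant $C>0$ such that whenever $\{B_{r_i}(x_i)\}_{i=1}^{M}$, $M\in\mathbb N$, is an $(S^2,c)$-nice family with $\max_i8cr_i\le1$, then for every $f\in L_p(\mathcal H_{\theta_2}\lfloor_{S^2})$, $$\sum_{i=1}^{M}\frac{\mu(B_{r_i}(x_i))}{r_i^p}\Big(\mathcal E_{\mathcal H_{\theta_2}\lfloor_{S^2}}(f,B_{2cr_i}(x_i))\Big)^p\le C\|f|\mathrm B^{1-\theta_2/p}_p(S^2)\|^p.$$
   Context: Standing setting: $(X,d)$ complete separable metric space, $\mu$ a Borel regular locally finite outer measure, $\operatorname{supp}\mu=X$, uniformly locally doubling (for every $R>0$, $\sup_{r\in(0,R]}\sup_x\mu(B_{2r}(x))/\mu(B_r(x))<\infty$). Balls are closed, $B_r(x)=\{y:d(x,y)\le r\}$, $B_k(x)=B_{2^{-k}}(x)$. A fixed $p\in(1,\infty)$; $X$ supports a weak local $(1,p)$-Poincaré inequality (for every $R>0$ there are $C,\lambda\ge1$ with $\inf_c\frac{1}{\mu(B_r(x))}\int_{B_r(x)}|f-c|d\mu\le Cr(\frac{1}{\mu(B_{\lambda r}(x))}\int_{B_{\lambda r}(x)}(\operatorname{lip}f)^pd\mu)^{1/p}$ for Lipschitz $f$, $x\in X$, $r\in(0,R]$). $\underline{Q}_\mu$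 is the infimum of $Q>0$ such that for every $R>0$ there is $C$ with $(r_{B'}/r_B)^Q\le C\mu(B')/\mu(B)$ for balls $B'\subset B$, $0<r_{B'}\le r_B\le R$. Notation: $\mathcal E_{\mathfrak m}(g,G):=\inf_{c\in\mathbb R}\mathfrak m(G)^{-1}\int_G|g-c|d\mathfrak m$ if $\mathfrak m(G)>0$, $0$ otherwise; $\mathfrak m\lfloor_S(E)=\mathfrak m(E\cap S)$. $\mathcal H_{\vartheta,\delta}(E):=\inf\{\sum\mu(B_{r_i}(x_i))r_i^{-\vartheta}:E\subset\bigcup B_{r_i}(x_i),0<r_i<\delta\}$, $\mathcal H_\vartheta=\lim_{\delta\to0}\mathcal H_{\vartheta,\delta}$. $\mathcal{ADR}_\vartheta(X)$: closed $S'$ with $\varkappa_1\mu(B_r(x))r^{-\vartheta}\le\mathcal H_\vartheta(B_r(x)\cap S')\le\varkappa_2\mu(B_r(x))r^{-\vartheta}$ for $x\in S'$, $r\in(0,1]$. Besov norm: $\|f|\mathrm B^s_p(S^2)\|:=\|f|L_p(\mathcal H_{\theta_2}\lfloor_{S^2})\|+(\sum_{k\ge1}2^{ksp}\int_{S^2}(\mathcal E_{\mathcal H_{\theta_2}\lfloor_{S^2}}(f,B_k(x)))^pd\mathcal H_{\theta_2}(x))^{1/p}$. A finite family of closed balls $\{B_{r_i}(x_i)\}$ is $(S^2,c)$-nice if the balls are pairwise disjoint, $\max_ir_i\le1$, and $B_{cr_i}(x_i)\cap S^2\ne\emptyset$ for all $i$. *)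

From HB Require Import structures.
From mathcomp Require Import all_boot all_order all_algebra.
From mathcomp Require Import all_classical all_reals all_analysis.

Set Implicit Arguments.
Unset Strict Implicit.
Unset Printing Implicit Defensive.

Import Order.TTheory GRing.Theory Num.Theory.
Local Open Scope classical_set_scope.
Local Open Scope ring_scope.

Section MetricMeasure.
Context {R : realType} {disp : measure_display} {X : measurableType disp}.
Variable d : X -> X -> R.

Definition is_metric : Prop :=
  [/\ forall x, d x x = 0,
      forall x y, d x y = d y x,
      forall x y z, d x z <= d x y + d y z
    & forall x y, d x y = 0 -> x = y].

Definition d_complete : Prop :=
  forall u : nat -> X,
    (forall e, 0 < e -> exists N, forall m n, (N <= m)%N -> (N <= n)%N ->
        d (u m) (u n) < e) ->
    exists l, forall e, 0 < e -> exists N, forall n, (N <= n)%N -> d (u n) l < e.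

Definition d_separable : Prop :=
  exists D : nat -> X, forall x e, 0 < e -> exists n, d x (D n) < e.

Definition d_open (A : set X) : Prop :=
  forall x, A x -> exists2 e, 0 < e & forall y, d x y < e -> A y.

Definition d_closed (A : set X) : Prop := d_open (~` A).

Definition d_borel : Prop := (measurable : set (set X)) = <<s d_open >>.

Definition cball (x : X) (r : R) : set X := [set y | d x y <= r].

Definition d_lipschitz (f : X -> R) : Prop :=
  exists L : R, forall x y, `|f x - f y| <= L * d x y.

Definition lip (f : X -> R) (x : X) : \bar R :=
  ereal_sup [set ereal_inf [set ereal_sup [set ((`|f y - f x| / r)%:E) | y in cball x r]
                            | r in [set r : R | 0 < r < delta]]
            | delta in [set delta : R | 0 < delta]].

Definition Eosc (m : set X -> \bar R) (g : X -> R) (G : set X) : \bar R :=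
  if (0 < m G)%E then
    ereal_inf [set (((fine (m G))^-1)%:E * \int[m]_(y in G) (`|g y - c|)%:E)%E
              | c in [set: R]]
  else 0%E.

Definition unif_loc_doubling (mu : set X -> \bar R) : Prop :=
  forall R0 : R, 0 < R0 -> exists C : R, forall r x, 0 < r <= R0 ->
    (mu (cball x (2 * r)) <= C%:E * mu (cball x r))%E.

Definition loc_poincare (mu : set X -> \bar R) (p : R) : Prop :=
  forall R0 : R, 0 < R0 -> exists C lam : R, 1 <= C /\ 1 <= lam /\
    forall f, d_lipschitz f -> forall x r, 0 < r <= R0 ->
      (Eosc mu f (cball x r) <=
       (C * r)%:E *
         ((((fine (mu (cball x (lam * r))))^-1)%:E *
            \int[mu]_(y in cball x (lam * r)) (lip f y `^ p)) `^ (p^-1)))%E.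

Definition lowQ_admissible (mu : set X -> \bar R) (Q : R) : Prop :=
  0 < Q /\
  forall R0 : R, 0 < R0 -> exists C : R,
    forall x' r' x r, cball x' r' `<=` cball x r -> 0 < r' <= r -> r <= R0 ->
      (((r' / r) `^ Q)%:E <= C%:E * (mu (cball x' r') / mu (cball x r)))%E.

(** lower Q_mu = inf of admissible Q (in extended reals, +oo if none). *)
Definition lowQ (mu : set X -> \bar R) : \bar R :=
  ereal_inf [set Q%:E | Q in lowQ_admissible mu].

(** H_{theta,delta}(E): countable (or finite, via the index set I) covers. *)
Definition Hcontent_delta (mu : set X -> \bar R) (theta delta : R) (E : set X)
  : \bar R :=
  ereal_inf [set s | exists (I : set nat) (xs : nat -> X) (rs : nat -> R),
     [/\ forall i, I i -> 0 < rs i < delta,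
         E `<=` \bigcup_(i in I) cball (xs i) (rs i)
       & s = (\sum_(i <oo | i \in I) (mu (cball (xs i) (rs i)) *
                                       ((rs i) `^ (- theta))%:E))%E]].

(** H_theta = lim_{delta -> 0} H_{theta,delta} (a monotone limit = sup). *)
Definition Hmeas (mu : set X -> \bar R) (theta : R) (E : set X) : \bar R :=
  ereal_sup [set Hcontent_delta mu theta delta E | delta in [set delta : R | 0 < delta]].

Definition ADR (mu : set X -> \bar R) (theta : R) (S : set X) : Prop :=
  d_closed S /\
  exists k1 k2 : R, 0 < k1 /\ 0 < k2 /\
    forall x r, S x -> 0 < r <= 1 ->
      (k1%:E * mu (cball x r) * (r `^ (- theta))%:E <= Hmeas mu theta (cball x r `&` S)
       /\ Hmeas mu theta (cball x r `&` S) <= k2%:E * mu (cball x r) * (r `^ (- theta))%:E)%E.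

Definition in_Lp (nu : set X -> \bar R) (p : R) (f : X -> R) : Prop :=
  measurable_fun setT f /\ (\int[nu]_x ((`|f x|%:E) `^ p) < +oo)%E.

(** Besov norm  || f | B^s_p(S) || w.r.t. the measure nu (= H_theta restricted to S). *)
Definition besov_norm (nu : set X -> \bar R) (S : set X) (s p : R) (f : X -> R)
  : \bar R :=
  ((\int[nu]_(x in S) ((`|f x|%:E) `^ p)) `^ (p^-1) +
   (\sum_(1 <= k <oo)
      ((2 `^ (k%:R * s * p))%:E *
       \int[nu]_(x in S) (Eosc nu f (cball x (2 `^ (- k%:R))) `^ p))) `^ (p^-1))%E.

Definition nice_family (S : set X) (c : R) (M : nat) (xs : 'I_M -> X)
  (rs : 'I_M -> R) : Prop :=
  [/\ forall i, 0 < rs i,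
      forall i j, i != j -> cball (xs i) (rs i) `&` cball (xs j) (rs j) = set0,
      forall i, rs i <= 1
    & forall i, cball (xs i) (c * rs i) `&` S !=set0].

End MetricMeasure.

From HB Require Import structures.
From mathcomp Require Import all_boot all_order all_algebra.
From mathcomp Require Import all_classical all_reals all_analysis measurable_realfun.
From mathcomp Require Import ring lra.
Import Order.TTheory GRing.Theory Num.Theory.
Set Implicit Arguments.
Unset Strict Implicit.
Local Open Scope classical_set_scope.
Local Open Scope ring_scope.

(* Fix a ball B_i = B(x_i, r_i) of the family, a point z_i of S within c r_i of
   x_i, and a dyadic radius 2^-k_i between 4 c r_i and 8 c r_i.  For every y in
   A_i = B(z_i, c r_i) ∩ S the ball B(x_i, 2 c r_i) lies inside B(y, 2^-k_i),
   and doubling together with the Ahlfors regularity of S makes the nu-measures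
   of these two balls comparable, so the oscillation of f on B(x_i, 2 c r_i) is
   at most a constant times its oscillation on B(y, 2^-k_i), uniformly in
   y in A_i.  As mu(B_i) r_i^-p <~ 2^(k_i (p - theta)) nu(A_i), the i-th term is
   bounded by the k_i-th Besov weight times the integral over A_i of the k_i-th
   Besov integrand.  Since the B_i are disjoint, doubling bounds the number of
   sets A_i of a fixed scale that contain a given point, and summing over i
   yields the Besov seminorm. *)

Definition dyadic {R : realType} (j : nat) : R := 2 `^ (- j%:R).

Section RealInequalities.
Context {R : realType}.

Lemma dyadic_gt0 j : 0 < dyadic j :> R.
Proof. exact: powR_gt0. Qed.

Lemma dyadic_le1 j : dyadic j <= 1 :> R.
Proof.
by rewrite /dyadic powR_invn // invf_le1 ?exprn_gt0 // exprn_ege1 ?ler1n.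
Qed.

Lemma dyadic_scale (a : R) : 0 < a -> 2 * a <= 1 ->
  exists2 k : nat, (0 < k)%N & a <= dyadic k <= 2 * a.
Proof.
move=> a_gt0 a_le.
have dyadicE k : dyadic k = (2 ^+ k)^-1 :> R by rewrite /dyadic powR_invn.
pose P k := a * 2 ^+ k <= 1.
have P1 : P 1%N by rewrite /P expr1 mulrC.
have P_bounded k : P k -> (k <= Num.truncn a^-1)%N.
  move=> Pk; have : (2 ^+ k < (Num.truncn a^-1).+1)%N.
    rewrite -(ltr_nat R) natrX; apply: le_lt_trans (truncnS_gt _).
    by rewrite -[a^-1]mulr1 ler_pdivlMl.
  exact/ltn_trans/ltn_expl.
have [k Pk k_max] := ex_maxnP (ex_intro _ 1%N P1) P_bounded.
have two_k : 0 < 2 ^+ k :> R by rewrite exprn_gt0.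
exists k; first exact: k_max.
rewrite dyadicE; apply/andP; split.
  by rewrite -(ler_pM2r two_k) mulVf ?gt_eqF.
have : ~~ P k.+1 by apply/negP => /k_max; rewrite ltnn.
rewrite /P -ltNge exprS => lt.
by rewrite -(ler_pM2r two_k) mulVf ?gt_eqF // -mulrA mulrCA ltW.
Qed.

Lemma inv_powR_le_weight (th p a b r rho : R) : 0 < th -> th < p ->
  0 < a -> a <= rho -> 0 < r -> rho <= b * r ->
  (r `^ p)^-1 <= b `^ p * rho `^ (th - p) * a `^ (- th).
Proof.
move=> th_gt0 th_lt_p a_gt0 a_le r_gt0 rho_le.
have rho_gt0 : 0 < rho := lt_le_trans a_gt0 a_le.
have b_gt0 : 0 < b by have := lt_le_trans rho_gt0 rho_le; rewrite pmulr_lgt0.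
apply: (@le_trans _ _ (b `^ p * rho `^ (th - p) * rho `^ (- th))); last first.
  rewrite ler_wpM2l ?mulr_ge0 ?powR_ge0 // !powRN lef_pV2 ?posrE ?powR_gt0 //.
  by rewrite (ge0_ler_powR (ltW th_gt0)) // nnegrE ltW.
rewrite -mulrA -powRD; last by apply/implyP => _; rewrite gt_eqF.
rewrite (_ : th - p + - th = - p); last by ring.
rewrite powRN ler_pdivlMr ?powR_gt0 // mulrC ler_pdivrMr ?powR_gt0 //.
rewrite -powRM ?(ltW b_gt0) ?(ltW r_gt0) //.
by rewrite (ge0_ler_powR (ltW (lt_trans th_gt0 th_lt_p))) // nnegrE ltW ?mulr_gt0.
Qed.

End RealInequalities.

Section MetricBalls.
Context {R : realType} {disp : measure_display} {X : measurableType disp}.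
Implicit Types (d : X -> X -> R) (x y : X) (r s : R).

Lemma sub_cball d x y r s : is_metric d -> d x y + r <= s ->
  cball d y r `<=` cball d x s.
Proof.
case=> _ _ d_tri _ hs z; rewrite /cball /= => hz.
by have := d_tri x y z; lra.
Qed.

Lemma measurable_cball d x r : is_metric d -> d_borel d ->
  measurable (cball d x r).
Proof.
case=> _ d_sym d_tri _ d_B.
rewrite -(setCK (cball d x r)); apply: measurableC.
rewrite d_B; apply: sub_gen_smallest => y /negP; rewrite -ltNge => r_lt.
exists (d x y - r) => [|w yw /=]; first by rewrite subr_gt0.
apply/negP; rewrite -ltNge.
by have := d_tri x w y; rewrite (d_sym w y); lra.
Qed.

Lemma d_closed_measurable d (A : set X) : d_borel d -> d_closed d A ->
  measurable A.
Proof.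
move=> d_B A_closed; rewrite -(setCK A); apply: measurableC.
by rewrite d_B; apply: sub_gen_smallest.
Qed.

End MetricBalls.

Section Oscillation.
Context {R : realType} {disp : measure_display} {X : measurableType disp}.
Variable nu : {measure set X -> \bar R}.
Local Open Scope ereal_scope.

(* Unlike [ge0_le_integral], no measurability is required (the nonnegative
   integral is a supremum over dominated simple functions): the Besov integrands
   [fun y => Eosc nu f (cball d y r) `^ p] are not known to be measurable. *)
Lemma ge0_le_integral_nonmeasurable (D : set X) (f g : X -> \bar R) :
  (forall x, D x -> 0 <= f x) -> (forall x, D x -> f x <= g x) ->
  \int[nu]_(x in D) f x <= \int[nu]_(x in D) g x.
Proof.
move=> f_ge0 f_le_g.
have g_ge0 x : D x -> 0 <= g x by move=> Dx; exact: le_trans (f_ge0 x Dx) (f_le_g x Dx).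
rewrite (ge0_integralE nu f_ge0) (ge0_integralE nu g_ge0).
apply: ereal_sup_le => _ [h /= h_le <-]; exists h => //= x.
apply: le_trans (h_le x) _; rewrite /patch; case: ifP => // /set_mem.
exact: f_le_g.
Qed.

Lemma Eosc_ge0 (f : X -> R) (G : set X) : 0 <= Eosc nu f G.
Proof.
rewrite /Eosc; case: ifP => // _.
apply: le_ereal_inf_tmp => _ [c _ <-].
by rewrite mule_ge0 ?integral_ge0 // lee_fin invr_ge0 fine_ge0.
Qed.

Lemma Eosc_le_subset (f : X -> R) (G G' : set X) (L : R) :
  measurable_fun setT f -> measurable G -> measurable G' -> G `<=` G' ->
  0 < nu G -> nu G' < +oo -> nu G' <= L%:E * nu G ->
  Eosc nu f G <= L%:E * Eosc nu f G'.
Proof.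
move=> mf mG mG' GG' nuG_gt0 nuG'_fin nuG'_le.
have nuG_le : nu G <= nu G' by apply: le_measure; rewrite ?inE.
have nuG'_gt0 : 0 < nu G' := lt_le_trans nuG_gt0 nuG_le.
have nuG_fin : nu G < +oo := le_lt_trans nuG_le nuG'_fin.
have a_gt0 : (0 < fine (nu G))%R by apply: fine_gt0; rewrite nuG_gt0.
have b_gt0 : (0 < fine (nu G'))%R by apply: fine_gt0; rewrite nuG'_gt0.
have ba_le : (fine (nu G') <= L * fine (nu G))%R.
  by rewrite -lee_fin EFinM !fineK ?ge0_fin_numE ?measure_ge0.
have L_gt0 : (0 < L)%R by have := lt_le_trans b_gt0 ba_le; rewrite pmulr_lgt0.
have inv_le : ((fine (nu G))^-1 <= L * (fine (nu G'))^-1)%R.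
  by rewrite ler_pdivlMr // mulrC ler_pdivrMr.
rewrite /Eosc nuG_gt0 nuG'_gt0 -lee_pdivrMl //.
apply: le_ereal_inf_tmp => _ [c _ <-].
rewrite lee_pdivrMl // muleA -EFinM.
apply: le_trans (ereal_inf_lbound _) _; first by exists c.
apply: lee_pmul; rewrite ?lee_fin ?invr_ge0 ?fine_ge0 ?integral_ge0 //.
apply: ge0_subset_integral => //; apply/measurable_EFinP.
by apply: measurableT_comp => //; apply: measurable_funB => //; exact: measurable_funS mf.
Qed.

End Oscillation.

Section Doubling.
Context {R : realType} {disp : measure_display} {X : measurableType disp}.
Variables (d : X -> X -> R) (mu : {measure set X -> \bar R}).
Hypothesis measurable_ball : forall x r, measurable (cball d x r).

Lemma mu_cball_iter_doubling (D : R) (m : nat) : 1 <= D ->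
  (forall x r, 0 < r <= 2 ^+ m ->
     (mu (cball d x (2 * r)) <= D%:E * mu (cball d x r))%E) ->
  forall n x r, (n <= m)%N -> 0 < r <= 1 ->
  (mu (cball d x (2 ^+ n * r)) <= (D ^+ n)%:E * mu (cball d x r))%E.
Proof.
move=> D_ge1 dbl; elim=> [|n IH] x r n_lt /[dup] r_bd /andP[r_gt0 r_le1].
  by rewrite expr0 mul1r mul1e.
have scale : 0 < 2 ^+ n * r <= 2 ^+ m.
  rewrite mulr_gt0 ?exprn_gt0 //= -[2 ^+ m]mulr1.
  by rewrite ler_pM ?exprn_ge0 ?(ltW r_gt0) // ler_eXn2l ?ltr1n // ltnW.
rewrite !exprS -mulrA EFinM -muleA; apply: le_trans (dbl _ _ scale) _.
by apply: lee_wpmul2l; [rewrite lee_fin (le_trans ler01) | exact: IH (ltnW n_lt) r_bd].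
Qed.

Lemma doubling_cball_ratio (L : R) : unif_loc_doubling d mu ->
  exists2 N : R, 0 < N & forall x r t, 0 < r <= 1 -> t <= L * r ->
    (mu (cball d x t) <= N%:E * mu (cball d x r))%E.
Proof.
move=> dbl.
have [m L_le] : exists m, L <= 2 ^+ m.
  exists (Num.truncn L).+1; apply: le_trans (ltW (truncnS_gt L)) _.
  by rewrite -natrX ler_nat ltnW // ltn_expl.
have [D0 dblD0] := dbl (2 ^+ m) (exprn_gt0 _ (ltr0Sn _ 1)).
pose D := Num.max D0 1.
have D_ge1 : 1 <= D by rewrite le_max lexx orbT.
have dblD x r : 0 < r <= 2 ^+ m ->
    (mu (cball d x (2 * r)) <= D%:E * mu (cball d x r))%E.
  move=> r_bd; apply: le_trans (dblD0 r x r_bd) _.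
  by rewrite lee_wpmul2r // lee_fin le_max lexx.
exists (D ^+ m); first by rewrite exprn_gt0 // (lt_le_trans ltr01).
move=> x r t /[dup] r_bd /andP[r_gt0 _] t_le.
apply: le_trans (@mu_cball_iter_doubling D m D_ge1 dblD m x r (leqnn m) r_bd).
apply: le_measure; rewrite ?inE // => y; rewrite /cball /= => /le_trans; apply.
by apply: le_trans t_le _; rewrite ler_wpM2r // ltW.
Qed.

End Doubling.

Section Packing.
Context {R : realType} {disp : measure_display} {X : measurableType disp}.
Variable mu : {measure set X -> \bar R}.
Local Open Scope ereal_scope.

Lemma packing_count (n : nat) (P : pred 'I_n) (U : 'I_n -> set X) (V : set X)
    (N : R) :
  (forall i, measurable (U i)) -> measurable V -> trivIset setT U ->
  0 < mu V -> mu V < +oo -> (0 <= N)%R ->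
  (forall i, P i -> U i `<=` V /\ mu V <= N%:E * mu (U i)) ->
  (\sum_(i < n | P i) 1 <= N)%R.
Proof.
move=> mU mV U_triv muV_gt0 muV_fin N_ge0 U_in.
have muV_fin_num : mu V \is a fin_num by rewrite ge0_fin_numE ?measure_ge0.
have v_gt0 : (0 < fine (mu V))%R by apply: fine_gt0; rewrite muV_gt0.
rewrite -(ler_pM2r v_gt0) -lee_fin mulr_suml -sumEFin.
rewrite (eq_bigr (fun=> mu V)); last by move=> i _; rewrite mul1r fineK.
apply: (@le_trans _ _ (\sum_(i < n | P i) N%:E * mu (U i))).
  by apply: lee_sum => i /U_in[].
rewrite -ge0_sume_distrr // -measure_bigsetU_ord // EFinM fineK //.
apply: lee_wpmul2l; rewrite ?lee_fin //; apply: le_measure; rewrite ?inE //.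
  exact: bigsetU_measurable.
apply: (big_ind (fun W => W `<=` V)) => [|W W' WV W'V|i /U_in[] //].
  exact: sub0set.
by move=> w [/WV|/W'V].
Qed.

End Packing.

Section BoundedOverlap.
Context {R : realType} {disp : measure_display} {X : measurableType disp}.
Variable nu : {measure set X -> \bar R}.
Local Open Scope ereal_scope.

Lemma sum_mul_measure_le_integral (n : nat) (P : pred 'I_n)
    (A : 'I_n -> set X) (a : 'I_n -> \bar R) (S : set X) (g : X -> \bar R)
    (L1 L2 : R) :
  measurable S -> (forall i, measurable (A i)) -> (forall i, A i `<=` S) ->
  (0 < L1)%R -> (0 < L2)%R -> (forall y, S y -> 0 <= g y) ->
  (forall i, 0 <= a i) -> (forall i y, P i -> A i y -> a i <= L1%:E * g y) ->
  (forall y, S y -> (\sum_(i < n | P i) \1_(A i) y <= L2)%R) ->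
  \sum_(i < n | P i) a i * nu (A i) <= (L1 * L2)%:E * \int[nu]_(y in S) g y.
Proof.
move=> mS mA A_sub L1_gt0 L2_gt0 g_ge0 a_ge0 a_le overlap.
have L_gt0 : (0 < L1 * L2)%R by rewrite mulr_gt0.
pose b i := ((L1 * L2)^-1)%:E * a i.
have b_ge0 i : 0 <= b i by rewrite mule_ge0 // lee_fin invr_ge0 ltW.
pose h y := \sum_(i < n | P i) b i * (\1_(A i) y)%:E.
have h_le_g y : S y -> h y <= g y.
  move=> Sy; rewrite /h /b; under eq_bigr do rewrite -muleA.
  rewrite -ge0_sume_distrr; last by move=> i _; rewrite mule_ge0.
  rewrite lee_pdivrMl //.
  apply: (@le_trans _ _ (\sum_(i < n | P i) L1%:E * g y * (\1_(A i) y)%:E)).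
    apply: lee_sum => i Pi; rewrite /indic.
    case Ay : (y \in A i); rewrite ?mulr1n ?mulr0n ?mule1 ?mule0 //.
    exact: a_le (set_mem Ay).
  rewrite -ge0_sume_distrr // sumEFin muleAC -EFinM (muleC _ (g y)) EFinM.
  rewrite (muleC (g y)) lee_wpmul2r ?g_ge0 // lee_fin ler_wpM2l ?(ltW L1_gt0) //.
  exact: overlap.
have int_h : \int[nu]_(y in S) h y = \sum_(i < n | P i) b i * nu (A i).
  rewrite /h; under eq_integral => y _ do rewrite big_mkcond.
  rewrite ge0_integral_sum //; first last.
  - by move=> i y _; case: ifP => // _; rewrite mule_ge0.
  - move=> i; case: (P i); last exact: measurable_cst.
    apply: emeasurable_funM; first exact: measurable_cst.
    exact/measurable_EFinP/measurable_indic.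
  rewrite [RHS]big_mkcond; apply: eq_bigr => i _; case: (P i); last first.
    exact: integral0.
  by rewrite ge0_integralZl ?integral_indic ?setIidl //;
    apply/measurable_EFinP/measurable_indic.
have -> : \sum_(i < n | P i) a i * nu (A i) =
          (L1 * L2)%:E * \sum_(i < n | P i) b i * nu (A i).
  rewrite ge0_sume_distrr; last by move=> i _; rewrite mule_ge0.
  by apply: eq_bigr => i _; rewrite /b !muleA -EFinM mulfV ?gt_eqF ?mul1e.
rewrite -int_h; apply: lee_wpmul2l; first by rewrite lee_fin ltW.
by apply: ge0_le_integral_nonmeasurable => y Sy; [apply: sume_ge0 => i _;
  rewrite mule_ge0 | exact: h_le_g].
Qed.

End BoundedOverlap.

Lemma fsum_le_nneseries_fibers {R : realType} (n : nat) (k : 'I_n -> nat)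
    (u : 'I_n -> \bar R) (v : nat -> \bar R) :
  (forall i, 0 < k i)%N -> (forall j, 0 <= v j)%E ->
  (forall j, (0 < j)%N -> \sum_(i < n | k i == j) u i <= v j)%E ->
  (\sum_(i < n) u i <= \sum_(1 <= j <oo) v j)%E.
Proof.
move=> k_gt0 v_ge0 fiber_le.
pose J := (\max_(i < n) k i).+1.
pose w j := if j == 0%N then 0%E else v j.
have k_lt i : (k i < J)%N by rewrite ltnS; exact: leq_bigmax.
rewrite (partition_big (fun i => inord (k i) : 'I_J) xpredT) //=.
apply: (@le_trans _ _ (\sum_(j < J) w j)%E).
  apply: lee_sum => j _; rewrite (eq_bigl (fun i => k i == j)); last first.
    by move=> i; rewrite -val_eqE /= inordK.
  rewrite /w; case: eqP => [j0|/eqP]; last by rewrite -lt0n; exact: fiber_le.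
  by rewrite big_pred0 // => i; rewrite j0 eqn0Ngt k_gt0.
rewrite -(big_mkord xpredT) big_ltn // /w eqxx add0e.
rewrite (@eq_big_nat _ _ _ 1 J _ v) => [|j /andP[j_gt0 _]]; last first.
  by rewrite gtn_eqF.
by apply: nneseries_lim_ge => j _ _; exact: v_ge0.
Qed.

Lemma dyadic_weight {R : realType} (th p : R) (j : nat) : p != 0 ->
  2 `^ (j%:R * (1 - th / p) * p) = dyadic j `^ (th - p).
Proof. by move=> p_neq0; rewrite /dyadic -powRrM; congr (_ `^ _); field. Qed.

Lemma ge0_lee_poweR {R : realType} (x y : \bar R) (p : R) : 0 <= p ->
  (0 <= x)%E -> (x <= y)%E -> (x `^ p <= y `^ p)%E.
Proof.
move=> p_ge0 x_ge0 x_le_y; apply: gt0_ler_poweR => //.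
- by rewrite in_itv /= leey andbT.
- by rewrite in_itv /= leey andbT (le_trans x_ge0 x_le_y).
Qed.

Section NiceFamilyEstimate.
Context {R : realType} {disp : measure_display} {X : measurableType disp}.
Variables (d : X -> X -> R) (mu nu : {measure set X -> \bar R}) (S : set X).
Variables (p th c N k1 k2 : R).
Hypothesis d_metric : is_metric d.
Hypothesis measurable_ball : forall x r, measurable (cball d x r).
Hypothesis mu_ball_fin : forall x r, (mu (cball d x r) < +oo)%E.
Hypothesis mu_ball_gt0 : forall x r, 0 < r -> (0 < mu (cball d x r))%E.
Hypothesis mS : measurable S.
Hypothesis nu_setIS : forall E, measurable E -> nu (E `&` S) = nu E.
Hypotheses (k1_gt0 : 0 < k1) (k2_gt0 : 0 < k2).
Hypothesis nu_ball_bounds : forall x r, S x -> 0 < r <= 1 ->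
  (k1%:E * mu (cball d x r) * (r `^ (- th))%:E <= nu (cball d x r)
   <= k2%:E * mu (cball d x r) * (r `^ (- th))%:E)%E.
Hypotheses (th_gt0 : 0 < th) (th_lt_p : th < p) (c_ge1 : 1 <= c).
Hypothesis N_gt0 : 0 < N.
Hypothesis mu_ball_ratio : forall x r t, 0 < r <= 1 -> t <= 16 * c * r ->
  (mu (cball d x t) <= N%:E * mu (cball d x r))%E.

Local Notation B := (cball d).

Let K := k2 * N / k1.
Let C1 := N * (8 * c) `^ p / k1.

Let c_gt0 : 0 < c. Proof. exact: lt_le_trans ltr01 c_ge1. Qed.
Let p_gt0 : 0 < p. Proof. exact: lt_trans th_lt_p. Qed.
Let K_gt0 : 0 < K. Proof. by rewrite !mulr_gt0 ?invr_gt0. Qed.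
Let C1_gt0 : 0 < C1. Proof. by rewrite !mulr_gt0 ?invr_gt0 ?powR_gt0 ?mulr_gt0. Qed.

Lemma energy_const_gt0 : 0 < C1 * K `^ p * N.
Proof. exact: mulr_gt0 (mulr_gt0 C1_gt0 (powR_gt0 _ K_gt0)) N_gt0. Qed.

Let d_sym x y : d x y = d y x. Proof. by case: d_metric. Qed.
Let d_tri x y z : d x z <= d x y + d y z. Proof. by case: d_metric. Qed.

Let mu_ballE x r : mu (B x r) = (fine (mu (B x r)))%:E.
Proof. by rewrite fineK // ge0_fin_numE ?measure_ge0. Qed.

Lemma nu_ball_gt0 z s : S z -> 0 < s <= 1 -> (0 < nu (B z s))%E.
Proof.
move=> Sz /[dup] s_bd /andP[s_gt0 _].
have /andP[lo _] := nu_ball_bounds Sz s_bd; apply: lt_le_trans lo.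
by rewrite !mule_gt0 ?lte_fin ?powR_gt0 ?mu_ball_gt0.
Qed.

Lemma nu_ball_fin y r : S y -> 0 < r <= 1 -> (nu (B y r) < +oo)%E.
Proof.
move=> Sy r_bd; have /andP[_ hi] := nu_ball_bounds Sy r_bd.
by apply: le_lt_trans hi _; rewrite mu_ballE -!EFinM ltry.
Qed.

Lemma nu_ball_comparable y z s rho : S y -> S z -> 0 < s -> s <= rho ->
  rho <= 1 -> d z y + rho <= 16 * s ->
  (nu (B y rho) <= K%:E * nu (B z s))%E.
Proof.
move=> Sy Sz s_gt0 s_le rho_le1 dist_le.
have rho_gt0 := lt_le_trans s_gt0 s_le.
have s_bd : 0 < s <= 1 by rewrite s_gt0 (le_trans s_le).
have rho_bd : 0 < rho <= 1 by rewrite rho_gt0.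
have mu_le : (mu (B y rho) <= N%:E * mu (B z s))%E.
  apply: le_trans (mu_ball_ratio z s_bd (t := d z y + rho) _).
    by apply: le_measure; rewrite ?inE //; exact: sub_cball.
  by apply: le_trans dist_le _; rewrite -mulrA ler_wpM2l // ler_peMl // (ltW s_gt0).
have pow_le : rho `^ (- th) <= s `^ (- th).
  rewrite !powRN lef_pV2 ?posrE ?powR_gt0 //.
  by rewrite (ge0_ler_powR (ltW th_gt0)) // nnegrE ltW.
have /andP[_ hi] := nu_ball_bounds Sy rho_bd.
have /andP[lo _] := nu_ball_bounds Sz s_bd.
apply: le_trans hi _; apply: le_trans _ (lee_wpmul2l _ lo); last first.
  by rewrite lee_fin ltW.
rewrite !muleA -EFinM /K divfK ?gt_eqF // EFinM -(muleA k2%:E N%:E).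
apply: lee_pmul; rewrite ?lee_fin ?powR_ge0 //.
  by rewrite mule_ge0 ?lee_fin ?(ltW k2_gt0) ?measure_ge0.
by apply: lee_wpmul2l; [rewrite lee_fin ltW | exact: mu_le].
Qed.


Variables (M : nat) (xs z : 'I_M -> X) (rs : 'I_M -> R) (k : 'I_M -> nat).
Variable f : X -> R.
Hypothesis rs_gt0 : forall i, 0 < rs i.
Hypothesis balls_trivI : trivIset setT (fun i => B (xs i) (rs i)).
Hypothesis z_in : forall i, S (z i).
Hypothesis z_near : forall i, d (xs i) (z i) <= c * rs i.
Hypothesis k_gt0 : forall i, (0 < k i)%N.
Hypothesis k_scale : forall i, 4 * (c * rs i) <= dyadic (k i) <= 8 * (c * rs i).
Hypothesis mf : measurable_fun setT f.

Let A i := B (z i) (c * rs i) `&` S.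
Let E i := Eosc nu f (B (xs i) (2 * c * rs i)).
Let g j y := (Eosc nu f (B y (dyadic j)) `^ p)%E.

Let cr_gt0 i : 0 < c * rs i. Proof. by rewrite mulr_gt0. Qed.

Let cr_le i : 4 * (c * rs i) <= 1.
Proof. by have /andP[lo _] := k_scale i; apply: le_trans lo (dyadic_le1 _). Qed.

Lemma Eosc_le_dyadic i y : A i y ->
  (E i <= K%:E * Eosc nu f (B y (dyadic (k i))))%E.
Proof.
case=> zy Sy; have {}zy : d (z i) y <= c * rs i := zy.
have /andP[rho_ge rho_le] := k_scale i.
have xz := z_near i; have s_le := cr_le i; have s_gt0 := cr_gt0 i.
have rho_le1 : dyadic (k i) <= 1 :> R := dyadic_le1 _.
have s_bd : 0 < c * rs i <= 1 by rewrite s_gt0 /=; lra.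
have yx : d y (xs i) <= 2 * (c * rs i).
  by have := d_tri y (z i) (xs i); rewrite (d_sym y (z i)) (d_sym (z i) (xs i)); lra.
have G_sub : B (xs i) (2 * c * rs i) `<=` B y (dyadic (k i)).
  by apply: sub_cball => //; rewrite -mulrA; lra.
have Z_sub : B (z i) (c * rs i) `<=` B (xs i) (2 * c * rs i).
  by apply: sub_cball => //; rewrite -mulrA; lra.
have nuZ_le : (nu (B (z i) (c * rs i)) <= nu (B (xs i) (2 * c * rs i)))%E.
  by apply: le_measure; rewrite ?inE.
apply: (Eosc_le_subset mf (measurable_ball _ _) (measurable_ball _ _) G_sub).
- exact: lt_le_trans (nu_ball_gt0 (z_in i) s_bd) nuZ_le.
- by apply: nu_ball_fin => //; rewrite rho_le1 andbT; lra.
- have s_le_rho : c * rs i <= dyadic (k i) by lra.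
  have dist_le : d (z i) y + dyadic (k i) <= 16 * (c * rs i) by lra.
  apply: le_trans (nu_ball_comparable Sy (z_in i) s_gt0 s_le_rho rho_le1 dist_le) _.
  by apply: lee_wpmul2l; rewrite // lee_fin ltW.
Qed.

Lemma ball_energy_le i :
  (mu (B (xs i) (rs i)) * ((rs i `^ p)^-1)%:E
   <= (C1 * 2 `^ ((k i)%:R * (1 - th / p) * p))%:E * nu (A i))%E.
Proof.
have /andP[rho_ge rho_le] := k_scale i.
have xz := z_near i; have s_le := cr_le i; have s_gt0 := cr_gt0 i.
have s_bd : 0 < c * rs i <= 1 by rewrite s_gt0 /=; lra.
have r_le_s : rs i <= c * rs i by rewrite ler_peMl // ltW.
have mu_le : (mu (B (xs i) (rs i)) <= N%:E * mu (B (z i) (c * rs i)))%E.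
  apply: le_trans (mu_ball_ratio (z i) s_bd (t := 2 * (c * rs i)) _).
    apply: le_measure; rewrite ?inE //.
    by apply: sub_cball => //; rewrite d_sym; lra.
  rewrite ler_pM2r //.
  have := c_ge1. lra.
have pow_le : (((rs i `^ p)^-1)%:E <=
    ((8 * c) `^ p * dyadic (k i) `^ (th - p) * (c * rs i) `^ (- th))%:E)%E.
  by rewrite lee_fin; apply: inv_powR_le_weight => //; rewrite -?mulrA; lra.
have /andP[lo _] := nu_ball_bounds (z_in i) s_bd.
rewrite /A nu_setIS // dyadic_weight ?gt_eqF //.
apply: le_trans (lee_pmul _ _ mu_le pow_le) _.
- exact: measure_ge0.
- by rewrite lee_fin invr_ge0 powR_ge0.
apply: le_trans _ (lee_wpmul2l _ lo); last by rewrite lee_fin mulr_ge0 ?powR_ge0 ?ltW.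
rewrite mu_ballE -!EFinM lee_fin le_eqVlt; apply/orP; left; apply/eqP.
by rewrite /C1; field; rewrite gt_eqF.
Qed.

Lemma overlap_le j y : \sum_(i < M | k i == j) \1_(A i) y <= N.
Proof.
rewrite (eq_bigr (fun i => if y \in A i then 1 else 0)); last first.
  by move=> i _; rewrite /indic; case: (y \in A i).
rewrite -big_mkcondr /=.
apply: (packing_count (mu := mu) (U := fun i => B (xs i) (rs i))
                      (V := B y (dyadic j))) => //.
- exact: mu_ball_gt0 (dyadic_gt0 _).
- exact: ltW.
move=> i /andP[/eqP kj /set_mem[zy _]]; have {}zy : d (z i) y <= c * rs i := zy.
have /andP[rho_ge rho_le] := k_scale i; rewrite kj in rho_ge rho_le.
have xz := z_near i; have r_gt0 := rs_gt0 i; have s_gt0 := cr_gt0 i.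
have r_le_s : rs i <= c * rs i by rewrite ler_peMl // ltW.
have r_bd : 0 < rs i <= 1 by rewrite r_gt0 /=; have := cr_le i; lra.
have xy : d (xs i) y <= 2 * (c * rs i) by have := d_tri (xs i) (z i) y; lra.
split; first by apply: sub_cball => //; rewrite d_sym; lra.
apply: le_trans (mu_ball_ratio (xs i) r_bd (t := d (xs i) y + dyadic j) _).
  by apply: le_measure; rewrite ?inE //; exact: sub_cball.
by rewrite -mulrA; lra.
Qed.

Let term i := (mu (B (xs i) (rs i)) * ((rs i `^ p)^-1)%:E * (E i `^ p))%E.
Let w (j : nat) := 2 `^ (j%:R * (1 - th / p) * p).

Lemma fiber_energy_le j : (\sum_(i < M | k i == j) term i
  <= (C1 * K `^ p * N)%:E * ((w j)%:E * \int[nu]_(y in S) g j y))%E.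
Proof.
have Ep_ge0 i : (0 <= E i `^ p)%E := poweR_ge0 _ _.
apply: (@le_trans _ _ (\sum_(i < M | k i == j) (C1 * w j)%:E * (E i `^ p * nu (A i)))%E).
  apply: lee_sum => i /eqP <-; rewrite (muleC (E i `^ p)) muleA.
  by apply: lee_wpmul2r => //; exact: ball_energy_le.
rewrite -ge0_sume_distrr; last by move=> i _; rewrite mule_ge0 ?measure_ge0.
have Ep_le i y : k i == j -> A i y -> (E i `^ p <= (K `^ p)%:E * g j y)%E.
  move=> /eqP <- Ay; rewrite /g -poweR_EFin -poweRM ?lee_fin ?(ltW K_gt0) ?Eosc_ge0 //.
  apply: ge0_lee_poweR; [exact: ltW | exact: Eosc_ge0 | exact: Eosc_le_dyadic].
have A_sub i : A i `<=` S by move=> y [].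
have mA i : measurable (A i) by apply: measurableI.
apply: le_trans (lee_wpmul2l _ (sum_mul_measure_le_integral nu mS mA A_sub
  (powR_gt0 _ K_gt0) N_gt0 (fun y _ => poweR_ge0 _ _) Ep_ge0 Ep_le
  (fun y _ => overlap_le j y))) _.
  by rewrite lee_fin mulr_ge0 ?powR_ge0 ?ltW.
rewrite !muleA -!EFinM.
by have -> : C1 * w j * (K `^ p * N) = C1 * K `^ p * N * w j by ring.
Qed.

Lemma nice_family_energy_le : (\sum_(i < M) term i <= (C1 * K `^ p * N)%:E *
  \sum_(1 <= j <oo) (w j)%:E * \int[nu]_(y in S) g j y)%E.
Proof.
have series_ge0 j : (0 <= (w j)%:E * \int[nu]_(y in S) g j y)%E.
  by rewrite mule_ge0 ?lee_fin ?powR_ge0 // integral_ge0 // => y _; exact: poweR_ge0.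
rewrite -nneseriesZl; last by move=> j _; exact: series_ge0.
apply: fsum_le_nneseries_fibers => // j; last by move=> _; exact: fiber_energy_le.
by apply: mule_ge0 (series_ge0 j); rewrite lee_fin ltW // energy_const_gt0.
Qed.

End NiceFamilyEstimate.

Section BesovNorm.
Context {R : realType} {disp : measure_display} {X : measurableType disp}.
Variables (d : X -> X -> R) (mu nu : {measure set X -> \bar R}).
Local Open Scope ereal_scope.

Lemma besov_series_le_norm (S : set X) (s p : R) (f : X -> R) : (0 < p)%R ->
  \sum_(1 <= k <oo) ((2 `^ (k%:R * s * p))%:E *
      \int[nu]_(x in S) (Eosc nu f (cball d x (2 `^ (- k%:R))) `^ p))
  <= besov_norm d nu S s p f `^ p.
Proof.
move=> p_gt0; rewrite /besov_norm; set T := (\sum_(1 <= k <oo) _).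
have T_ge0 : 0 <= T.
  apply: nneseries_ge0 => j _ _; rewrite mule_ge0 ?lee_fin ?powR_ge0 //.
  by apply: integral_ge0 => y _; exact: poweR_ge0.
rewrite {1}(_ : T = (T `^ p^-1) `^ p); last first.
  by rewrite -poweRrM mulVf ?gt_eqF ?poweRe1.
apply: ge0_lee_poweR; rewrite ?poweR_ge0 ?(ltW p_gt0) //.
by apply: leeDr; exact: poweR_ge0.
Qed.

Lemma ADR_nu_cball_bounds (th : R) (S : set X) :
  (forall x r, measurable (cball d x r)) -> ADR d mu th S -> (forall E, measurable E -> nu E = Hmeas d mu th (E `&` S)) ->
  exists k1 k2 : R, [/\ (0 < k1)%R, (0 < k2)%R & forall x r, S x -> (0 < r <= 1)%R ->
    k1%:E * mu (cball d x r) * (r `^ (- th))%:E <= nu (cball d x r)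
    <= k2%:E * mu (cball d x r) * (r `^ (- th))%:E].
Proof.
move=> mball [_ [k1 [k2 [k1_gt0 [k2_gt0 bounds]]]]] nuE.
exists k1, k2; split => // x r Sx r_bd.
by have [lo hi] := bounds x r Sx r_bd; rewrite nuE ?lo ?hi.
Qed.

End BesovNorm.

Lemma nice_family_trivIset {R : realType} {disp : measure_display}
    {X : measurableType disp} (d : X -> X -> R) (S : set X) (c : R) (M : nat)
    (xs : 'I_M -> X) (rs : 'I_M -> R) :
  nice_family d S c xs rs -> trivIset setT (fun i => cball d (xs i) (rs i)).
Proof.
case=> _ disjoint _ _ i j _ _ [w w_in]; apply/eqP/negPn/negP => /disjoint ij0.
by rewrite ij0 in w_in.
Qed.

Lemma setI_support_measure {R : realType} {disp : measure_display}
    {X : measurableType disp} (nu F : set X -> \bar R) (S : set X) :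
  measurable S -> (forall E, measurable E -> nu E = F (E `&` S)) ->
  forall E, measurable E -> nu (E `&` S) = nu E.
Proof.
move=> mS nuE E mE; have mES := measurableI _ _ mE mS.
by rewrite !nuE // -setIA setIid.
Qed.

Theorem lemma3p18 (R : realType) (disp : measure_display) (X : measurableType disp)
  (d : X -> X -> R) (mu : {measure set X -> \bar R}) (p theta2 : R) (S2 : set X)
  (nu : {measure set X -> \bar R}) :
  is_metric d -> d_complete d -> d_separable d -> d_borel d ->
  (forall x r, (mu (cball d x r) < +oo)%E) ->
  (forall x r, 0 < r -> (0 < mu (cball d x r))%E) ->
  unif_loc_doubling d mu ->
  1 < p ->
  loc_poincare d mu p ->
  0 < theta2 -> theta2 < p -> (theta2%:E < lowQ d mu)%E ->
  ADR d mu theta2 S2 ->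
  (forall E, measurable E -> nu E = Hmeas d mu theta2 (E `&` S2)) ->
  forall c : R, 1 <= c ->
  exists C : R, 0 < C /\
    forall (M : nat) (xs : 'I_M -> X) (rs : 'I_M -> R),
      nice_family d S2 c xs rs ->
      (forall i, 8 * c * rs i <= 1) ->
      forall f : X -> R, in_Lp nu p f ->
        (\sum_(i < M)
           (mu (cball d (xs i) (rs i)) * ((rs i `^ p)^-1)%:E *
            (Eosc nu f (cball d (xs i) (2 * c * rs i)) `^ p))
         <= C%:E * (besov_norm d nu S2 (1 - theta2 / p) p f `^ p))%E.
Proof.
move=> d_metric _ _ d_B mu_fin mu_gt0 dbl _ _ th_gt0 th_lt_p _ S_ADR nuE c c_ge1.
have mball x r : measurable (cball d x r) by exact: measurable_cball.
have mS := d_closed_measurable d_B S_ADR.1.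
have nu_setIS := setI_support_measure mS nuE.
have [k1 [k2 [k1_gt0 k2_gt0 nu_bounds]]] := ADR_nu_cball_bounds mball S_ADR nuE.
have [N N_gt0 mu_ratio] := doubling_cball_ratio mball (16 * c) dbl.
have C_gt0 := energy_const_gt0 p k1_gt0 k2_gt0 c_ge1 N_gt0.
eexists; split; first exact: C_gt0.
move=> M xs rs /[dup] /nice_family_trivIset trivI [rs_gt0 _ _ meets] rs_le f [mf _].
have [z /all_and2[z_near z_in]] := choice meets.
have scale i : exists kk, (0 < kk)%N /\
    4 * (c * rs i) <= dyadic kk <= 8 * (c * rs i).
  have [|| kk kk_gt0 kk_bd] := dyadic_scale (a := 4 * (c * rs i)).
  - by rewrite !mulr_gt0 // (lt_le_trans ltr01).
  - by have := rs_le i; rewrite !mulrA; lra.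
  exists kk; split => //; case/andP: kk_bd => lo hi; rewrite lo /=; lra.
have [k /all_and2[k_gt0 k_scale]] := choice scale.
apply: le_trans (nice_family_energy_le d_metric mball mu_fin mu_gt0 mS nu_setIS
  k1_gt0 k2_gt0 nu_bounds th_gt0 th_lt_p c_ge1 N_gt0 mu_ratio rs_gt0 trivI z_in
  z_near k_gt0 k_scale mf) _.
apply: lee_wpmul2l; first by rewrite lee_fin ltW.
exact: besov_series_le_norm (lt_trans th_gt0 th_lt_p).
Qed.
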